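(* Let $k \geq 1$ and $p \geq 2$ be integers. Then for every $\ell = 0, \dots, k-1$, $$\sum_{m=0}^{p-1} \beta_{m,\ell} = p\, \alpha_\ell ,$$ where $\alpha_\ell$ and $\beta_{m,\ell}$ are the coefficients defined in the context below.
   Context: For an integer $j \geq 0$ define the polynomials $$\gamma_j(\xi) = (-1)^j \int_0^{\xi} \binom{-s}{j}\, ds, \qquad \widetilde\gamma_j(\xi) = \frac{d}{d\xi}\gamma_j(\xi) = (-1)^j \binom{-\xi}{j} = \frac{\xi(\xi+1)\cdots(\xi+j-1)}{j!},$$ where $\binom{x}{j} = x(x-1)\cdots(x-j+1)/j!$ for real $x$ (and $\widetilde\gamma_0 \equiv 1$). The coefficients of the classical $k$-step Adams–Bashforth method are $$\alpha_\ell = (-1)^\ell \sum_{i=\ell}^{k-1} \binom{i}{\ell}\, \gamma_i(1), \qquad \ell = 0,\dots,k-1,$$ so that the $k$-step Adams–Bashforth scheme for $y' = By$ reads $y_{n+1} = y_n + \Delta t\, B \sum_{\ell=0}^{k-1}\alpha_\ell y_{n-\ell}$ (e.g. $k=2$: $\alpha = (3/2,-1/2)$; $k=3$: $\alpha=(23/12,-16/12,5/12)$). For $m = 0,\dots,p-1$ and $\ell = 0,\dots,k-1$ the local time-stepping coefficients are $$\beta_{m,\ell} = \sum_{i=0}^{k-1} \alpha_i \sum_{j=\ell}^{k-1} (-1)^\ell \binom{j}{\ell}\, \widetilde\gamma_j\!\left(\frac{m-i}{p}\right).$$ *)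

From HB Require Import structures.
From mathcomp Require Import all_boot all_order all_algebra.
Set Implicit Arguments. Unset Strict Implicit. Unset Printing Implicit Defensive.
Import Order.TTheory GRing.Theory Num.Theory.
Local Open Scope ring_scope.

Definition binom_poly (j : nat) : {poly rat} :=
  (j`!%:R)^-1 *: \prod_(i < j) ('X - (i%:R)%:P).

Definition prim (p : {poly rat}) : {poly rat} :=
  \poly_(i < (size p).+1) (if i is i'.+1 then p`_i' / i%:R else 0).

Definition gamma (j : nat) (xi : rat) : rat :=
  (-1) ^+ j * (prim (binom_poly j \Po (- 'X))).[xi].

Definition gtilde (j : nat) (xi : rat) : rat :=
  (-1) ^+ j * (binom_poly j).[- xi].

(* Adams--Bashforth coefficients of the k-step method *)
Definition alpha (k l : nat) : rat :=
  (-1) ^+ l * \sum_(l <= i < k) ('C(i, l))%:R * gamma i 1.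

Definition beta (k p m l : nat) : rat :=
  \sum_(i < k) alpha k i *
    \sum_(l <= j < k) (-1) ^+ l * ('C(j, l))%:R *
        gtilde j ((m%:R - i%:R) / p%:R).

From mathcomp Require Import all_boot all_order all_algebra.
From mathcomp Require Import ring.
Set Implicit Arguments. Unset Strict Implicit.
Import GRing.Theory Num.Theory.
Local Open Scope ring_scope.

(* Write gt_j for the polynomial xi |-> gtilde_j(xi) and
     quad_k(q) = \sum_(i < k) alpha_i q(-i)
   for the quadrature rule underlying the k-step Adams--Bashforth method.
   1. quad_k is exact on polynomials of degree < k: quad_k(q) = \int_0^1 q.
      Both sides are linear, and they agree on the triangular basis gt_0, ...,
      gt_(k-1), because gt_n(-i) = (-1)^n C(i, n) and the binomial inversion
      formula turns quad_k(gt_n) back into gamma_n(1) = \int_0^1 gt_n.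
   2. With Q_j(x) = \sum_(m < p) gt_j((x + m) / p), a polynomial of degree
      <= j, exchanging sums gives
        \sum_m beta_{m,l} = \sum_(l <= j < k) (-1)^l C(j, l) quad_k(Q_j),
      while the substitution rule and a telescoping sum give
        \int_0^1 Q_j = p gamma_j(1). *)

Lemma prim_deriv (q : {poly rat}) : (prim q)^`() = q.
Proof.
apply/polyP => i; rewrite coef_deriv coef_poly /=.
case: ifP => [_|/negbT].
  by rewrite -mulr_natr; field; rewrite nat1r pnatr_eq0.
by rewrite ltnS -ltnNge => hi; rewrite mul0rn nth_default.
Qed.

Lemma prim_at0 (q : {poly rat}) : (prim q).[0] = 0.
Proof. by rewrite horner_coef0 coef_poly. Qed.

Lemma deriv_eq0_const (R : numDomainType) (P : {poly R}) :
  P^`() = 0 -> P = (P`_0)%:P.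
Proof.
move=> dP0; apply/polyP => -[|n]; rewrite coefC //=.
have /eqP := congr1 (fun r : {poly R} => r`_n) dP0.
by rewrite coef_deriv coef0 mulrn_eq0 => /eqP.
Qed.

Lemma prim_antiderivE (q F : {poly rat}) (x : rat) :
  F^`() = q -> (prim q).[x] = F.[x] - F.[0].
Proof.
move=> dF; have /deriv_eq0_const cst : (prim q - F)^`() = 0.
  by rewrite derivB prim_deriv dF subrr.
have := congr1 (horner^~ x) cst; have := congr1 (horner^~ 0) cst.
rewrite /= !hornerE prim_at0 => e0 e1.
have /eqP : (prim q).[x] - F.[x] = - F.[0] by rewrite e1 -e0 sub0r.
by rewrite subr_eq addrC => /eqP.
Qed.

Definition int01 (q : {poly rat}) : rat := (prim q).[1].

Lemma int01D (q r : {poly rat}) : int01 (q + r) = int01 q + int01 r.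
Proof.
rewrite /int01 (prim_antiderivE (F := prim q + prim r)); last by rewrite derivD !prim_deriv.
by rewrite !hornerD !prim_at0 addr0.
Qed.

Lemma int01Z (c : rat) (q : {poly rat}) : int01 (c *: q) = c * int01 q.
Proof.
rewrite /int01 (prim_antiderivE (F := c *: prim q)); last by rewrite derivZ prim_deriv.
by rewrite !hornerZ prim_at0 mulr0 subr0.
Qed.

Lemma int01_sum (I : Type) (s : seq I) (f : I -> {poly rat}) :
  int01 (\sum_(i <- s) f i) = \sum_(i <- s) int01 (f i).
Proof.
apply: (big_morph int01 int01D).
by rewrite -(scale0r (0 : {poly rat})) int01Z mul0r.
Qed.

Definition shift_poly (p m : nat) : {poly rat} := ('X + (m%:R)%:P) * ((p%:R)^-1)%:P.

Lemma int01_comp_shift (p m : nat) (g : {poly rat}) : p != 0%N ->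
  int01 (g \Po shift_poly p m) =
  p%:R * ((prim g).[m.+1%:R / p%:R] - (prim g).[m%:R / p%:R]).
Proof.
move=> p0; rewrite /int01 (prim_antiderivE (F := p%:R *: (prim g \Po shift_poly p m))).
  by rewrite !hornerZ !horner_comp /shift_poly !hornerE -nat1r mulrBr.
rewrite derivZ deriv_comp prim_deriv /shift_poly derivM derivD derivX !derivC.
rewrite addr0 mulr0 addr0 mul1r scalerAr scale_polyC mulfV ?pnatr_eq0 //.
by rewrite polyC1 mulr1.
Qed.

Section TriangularBasis.
Variable R : fieldType.
Variables (F G : {poly R} -> R) (g : nat -> {poly R}).
Hypothesis FD : forall q r : {poly R}, F (q + r) = F q + F r.
Hypothesis FZ : forall (c : R) (q : {poly R}), F (c *: q) = c * F q.
Hypothesis GD : forall q r : {poly R}, G (q + r) = G q + G r.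
Hypothesis GZ : forall (c : R) (q : {poly R}), G (c *: q) = c * G q.
Hypothesis g_size : forall n, (size (g n) <= n.+1)%N.
Hypothesis g_lead : forall n, (g n)`_n != 0.

Lemma eq_on_triangular_basis (k : nat) :
  (forall n, (n < k)%N -> F (g n) = G (g n)) ->
  forall q : {poly R}, (size q <= k)%N -> F q = G q.
Proof.
elim: k => [|n IH] FG q.
  rewrite leqn0 size_poly_eq0 => /eqP ->.
  by rewrite -(scale0r (0 : {poly R})) FZ GZ !mul0r.
move=> szq; set c := q`_n / (g n)`_n.
have szr : (size (q - c *: g n)%R <= n)%N.
  apply/leq_sizeP => j; rewrite coefB coefZ leq_eqVlt => /orP[/eqP <-|ltnj].
    by rewrite /c divfK // subrr.
  by rewrite !nth_default ?mulr0 ?subrr // (leq_trans (g_size n), leq_trans szq).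
rewrite -(subrK (c *: g n) q) FD GD FZ GZ FG // IH // => j ltjn.
exact/FG/ltnW.
Qed.

End TriangularBasis.

Definition gtilde_poly (n : nat) : {poly rat} := (-1) ^+ n *: (binom_poly n \Po - 'X).

Lemma gtilde_polyE (n : nat) (x : rat) : gtilde n x = (gtilde_poly n).[x].
Proof. by rewrite /gtilde /gtilde_poly [RHS]hornerZ horner_comp hornerN hornerX. Qed.

Lemma gamma_int01 (n : nat) : gamma n 1 = int01 (gtilde_poly n).
Proof. by rewrite /gtilde_poly int01Z. Qed.

Definition rising (n : nat) : {poly rat} := \prod_(i < n) ('X + (i%:R)%:P).

Lemma size_rising (n : nat) : size (rising n) = n.+1.
Proof.
rewrite /rising (eq_bigr (fun i : 'I_n => 'X - (- i%:R)%:P)) => [|i _].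
  by rewrite size_prod_XsubC [index_enum _]unlock -enumT -cardT card_ord.
by rewrite rmorphN opprK.
Qed.

Lemma lead_rising (n : nat) : (rising n)`_n = 1.
Proof.
have /monicP : rising n \is monic by apply: monic_prod => i _; apply: monicXaddC.
by rewrite lead_coefE size_rising.
Qed.

Lemma gtilde_rising (n : nat) : gtilde_poly n = (n`!%:R)^-1 *: rising n.
Proof.
rewrite /gtilde_poly /binom_poly comp_polyZ rmorph_prod /=.
rewrite (eq_bigr (fun i : 'I_n => - ('X + (i%:R)%:P))) => [|i _]; last first.
  by rewrite comp_polyB comp_polyX comp_polyC opprD.
rewrite prodrN card_ord -/(rising n).
have -> : (-1) ^+ n * rising n = ((-1) ^+ n : rat) *: rising n.
  by rewrite -mul_polyC rmorphXn rmorphN1.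
by rewrite !scalerA mulrAC -exprMn mulrNN mulr1 expr1n mul1r.
Qed.

Lemma size_gtilde (n : nat) : (size (gtilde_poly n) <= n.+1)%N.
Proof. by rewrite gtilde_rising (leq_trans (size_scale_leq _ _)) ?size_rising. Qed.

Lemma lead_gtilde (n : nat) : (gtilde_poly n)`_n = (n`!%:R)^-1.
Proof. by rewrite gtilde_rising coefZ lead_rising mulr1. Qed.

Lemma binom_poly_nat (i n : nat) : (binom_poly n).[i%:R] = 'C(i, n)%:R.
Proof.
rewrite /binom_poly hornerZ horner_prod.
have -> : \prod_(t < n) ('X - (t%:R)%:P).[i%:R] = (i ^_ n)%:R :> rat.
  elim: n => [|n IH]; first by rewrite big_ord0 ffactn0.
  rewrite big_ord_recr /= IH hornerXsubC ffactnSr natrM.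
  by case: (leqP n i) => [/natrB ->|/ffact_small ->]; rewrite ?mul0r.
by rewrite -bin_ffact natrM mulrC mulrK // unitfE pnatr_eq0 -lt0n fact_gt0.
Qed.

Lemma gtilde_poly_Nnat (i n : nat) :
  (gtilde_poly n).[- i%:R] = (-1) ^+ n * 'C(i, n)%:R.
Proof.
by rewrite /gtilde_poly hornerZ horner_comp hornerN hornerX opprK binom_poly_nat.
Qed.

Lemma coef_XaddC1_exp (i n : nat) : (('X + 1 : {poly rat}) ^+ i)`_n = 'C(i, n)%:R.
Proof.
elim: i n => [|i IH] [|n]; rewrite ?expr0 ?coefC // exprS mulrDl mul1r coefD coefXM.
  by rewrite /= add0r !IH !bin0.
by rewrite !IH binS natrD addrC.
Qed.

(* \sum_i (-1)^i C(t, i) C(i, n) = (-1)^n [t = n], for any range [0, K) with t < K,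
   read off from the coefficient of X^n in (-X)^t = (1 - (X + 1))^t. *)
Lemma binomial_inversion (t n K : nat) : (t < K)%N ->
  \sum_(0 <= i < K) (-1) ^+ i * 'C(t, i)%:R * 'C(i, n)%:R =
  (-1) ^+ n * (t == n)%:R :> rat.
Proof.
move=> ltK; rewrite (big_cat_nat (n := t.+1)) //= [X in _ + X]big1_seq; last first.
  by move=> i; rewrite mem_index_iota => /andP[_ /andP[/bin_small -> _]]; rewrite mulr0 mul0r.
have sgnZ (m : nat) (r : {poly rat}) : (-1) ^+ m * r = ((-1) ^+ m : rat) *: r.
  by rewrite -mul_polyC rmorphXn rmorphN1.
have E : (- 'X : {poly rat}) ^+ t = \sum_(i < t.+1) (- ('X + 1)) ^+ i *+ 'C(t, i).
  by rewrite -exprD1n opprD subrK.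
have -> : (-1) ^+ n * (t == n)%:R = (-1) ^+ t * (n == t)%:R :> rat.
  by rewrite eq_sym; case: eqP => [->|_]; rewrite ?mulr0.
have := congr1 (fun r : {poly rat} => r`_n) E.
rewrite /= [in (- 'X) ^+ t]exprNn sgnZ coefZ coefXn coef_sum addr0 big_mkord => ->.
apply: eq_bigr => i _.
by rewrite coefMn [in (- ('X + 1)) ^+ i]exprNn sgnZ coefZ coef_XaddC1_exp -mulr_natr; ring.
Qed.

Definition quad (k : nat) (q : {poly rat}) : rat :=
  \sum_(i < k) alpha k i * q.[- i%:R].

Lemma quadD (k : nat) (q r : {poly rat}) : quad k (q + r) = quad k q + quad k r.
Proof. by rewrite /quad -big_split; apply: eq_bigr => i _; rewrite hornerD mulrDr. Qed.

Lemma quadZ (k : nat) (c : rat) (q : {poly rat}) : quad k (c *: q) = c * quad k q.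
Proof. by rewrite /quad mulr_sumr; apply: eq_bigr => i _; rewrite hornerZ; ring. Qed.

(* The sum defining alpha_i may start at 0, since C(t, i) = 0 for t < i. *)
Lemma alpha_from0 (k i : nat) :
  alpha k i = (-1) ^+ i * \sum_(0 <= t < k) 'C(t, i)%:R * gamma t 1.
Proof.
rewrite /alpha; congr (_ * _); symmetry.
have vanish j : (j < i)%N -> 'C(j, i)%:R * gamma j 1 = 0.
  by move/bin_small ->; rewrite mul0r.
case: (leqP i k) => [leik|ltki].
  rewrite (big_cat_nat (n := i)) //= big1_seq ?add0r // => t.
  by rewrite mem_index_iota => /andP[_ /andP[_ /vanish]].
rewrite [RHS]big_geq ?(ltnW ltki) // big1_seq // => t.
by rewrite mem_index_iota => /andP[_ /andP[_ /ltn_trans/(_ ltki)/vanish]].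
Qed.

Lemma quad_gtilde (k n : nat) : (n < k)%N -> quad k (gtilde_poly n) = gamma n 1.
Proof.
move=> ltnk; rewrite /quad -(big_mkord xpredT (fun i => alpha k i * _.[- i%:R])).
under eq_bigr => i _ do rewrite gtilde_poly_Nnat alpha_from0.
transitivity (\sum_(0 <= i < k) \sum_(0 <= t < k)
   gamma t 1 * ((-1) ^+ n * ((-1) ^+ i * 'C(t, i)%:R * 'C(i, n)%:R))).
  by apply: eq_bigr => i _; rewrite mulr_sumr mulr_suml; apply: eq_bigr => t _; ring.
rewrite exchange_big /=.
transitivity (\sum_(0 <= t < k) gamma t 1 * (t == n)%:R).
  apply: eq_big_nat => t /andP[_ ltk]; rewrite -!mulr_sumr binomial_inversion //.
  by rewrite signrMK.
rewrite (bigD1_seq n) ?mem_index_iota ?iota_uniq //= eqxx mulr1 big1 ?addr0 //.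
by move=> t /negbTE ->; rewrite mulr0.
Qed.

Lemma quad_exact (k : nat) (q : {poly rat}) : (size q <= k)%N -> quad k q = int01 q.
Proof.
apply: (eq_on_triangular_basis (@quadD k) (@quadZ k) int01D int01Z size_gtilde).
  by move=> n; rewrite lead_gtilde invr_eq0 pnatr_eq0 -lt0n fact_gt0.
by move=> n ltnk; rewrite quad_gtilde // gamma_int01.
Qed.

Definition Qsum (p j : nat) : {poly rat} :=
  \sum_(0 <= m < p) (gtilde_poly j \Po shift_poly p m).

Lemma Qsum_Nnat (p j i : nat) :
  (Qsum p j).[- i%:R] = \sum_(0 <= m < p) gtilde j ((m%:R - i%:R) / p%:R).
Proof.
rewrite /Qsum horner_sum; apply: eq_bigr => m _.
by rewrite gtilde_polyE horner_comp /shift_poly !hornerE addrC.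
Qed.

(* deg Q_j <= j, since x |-> (x + m) / p is affine. *)
Lemma size_Qsum (p j : nat) : (size (Qsum p j) <= j.+1)%N.
Proof.
rewrite /Qsum; apply: (big_ind (fun r : {poly rat} => size r <= j.+1)%N).
- by rewrite size_poly0.
- by move=> r s hr hs; rewrite (leq_trans (size_polyD _ _)) // geq_max hr hs.
move=> m _; apply: leq_trans (size_comp_poly_leq _ _) _.
have szs : ((size (shift_poly p m)).-1 <= 1)%N.
  rewrite /shift_poly mulrC mul_polyC -subn1 leq_subLR.
  by rewrite (leq_trans (size_scale_leq _ _)) ?size_XaddC.
rewrite ltnS (leq_trans (leq_mul (leqnn _) szs)) // muln1 -subn1 leq_subLR.
exact: size_gtilde.
Qed.

(* Integral of the average: the substitution pieces telescope to p gamma_j(1). *)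
Lemma int01_Qsum (p j : nat) : p != 0%N -> int01 (Qsum p j) = p%:R * gamma j 1.
Proof.
move=> p0; rewrite /Qsum int01_sum.
under eq_bigr do rewrite int01_comp_shift //.
rewrite -mulr_sumr (telescope_sumr (fun m => (prim (gtilde_poly j)).[m%:R / p%:R])) //.
by rewrite divff ?pnatr_eq0 // mul0r prim_at0 subr0 gamma_int01.
Qed.

Lemma sum_beta_quad (k p l : nat) :
  \sum_(0 <= m < p) beta k p m l =
  \sum_(l <= j < k) (-1) ^+ l * 'C(j, l)%:R * quad k (Qsum p j).
Proof.
rewrite /beta exchange_big /=.
transitivity (\sum_(i < k) \sum_(l <= j < k)
   alpha k i * ((-1) ^+ l * 'C(j, l)%:R * (Qsum p j).[- i%:R])).
  apply: eq_bigr => i _; rewrite -!mulr_sumr; congr (_ * _).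
  by rewrite exchange_big; apply: eq_bigr => j _; rewrite Qsum_Nnat mulr_sumr.
rewrite exchange_big; apply: eq_bigr => j _; rewrite /quad mulr_sumr.
by apply: eq_bigr => i _; ring.
Qed.

Theorem mainTheorem1 (k p : nat) (hk : (1 <= k)%N) (hp : (2 <= p)%N)
  (l : nat) (hl : (l < k)%N) :
  \sum_(0 <= m < p) beta k p m l = p%:R * alpha k l.
Proof.
have p0 : p != 0%N by rewrite -lt0n (leq_trans _ hp).
rewrite sum_beta_quad /alpha !mulr_sumr; apply: eq_big_nat => j /andP[_ ltjk].
rewrite quad_exact ?int01_Qsum //; first ring.
exact: leq_trans (size_Qsum p j) ltjk.
Qed.
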